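(* Let $P$ be a finite $\vee$-semilattice, $K\subseteq P$ any subset, and $A\in\mathbb{R}$. Then $\kappa:P\to\mathbb{R}$, $\kappa(x)=A-|\{k\in K: x\le k\}|$, is an isotone upper valuation on $P$.
   Context: For a poset $(P,\le)$ and $x\in P$: $\downarrow x=\{x'\in P: x'\le x\}$, $\uparrow x=\{x'\in P: x\le x'\}$. A function $f:P\to\mathbb{R}$ is isotone if $x\le y\Rightarrow f(x)\le f(y)$. For an isotone $f$ and $x,y\in P$ define $f^-(x,y)=\sup\{f(z):z\in\downarrow x\cap\downarrow y\}$ and $f^+(x,y)=\inf\{f(z):z\in\uparrow x\cap\uparrow y\}$, with $\inf\emptyset=+\infty$, $\sup\emptyset=-\infty$. An isotone $v:P\to\mathbb{R}$ is an upper valuation if $\uparrow x\cap\uparrow y\neq\emptyset$ for all $x,y\in P$ and $v^-(x,y)+v^+(x,y)\le v(x)+v(y)$ for all $x,y\in P$. *)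

From HB Require Import structures.
From mathcomp Require Import all_boot all_order all_algebra.
Set Implicit Arguments. Unset Strict Implicit. Unset Printing Implicit Defensive.
Import Order.TTheory GRing.Theory Num.Theory.
Local Open Scope ring_scope.

Section UpperValuation.
Context {disp : Order.disp_t} {P : finPOrderType disp} {R : realFieldType}.

Definition isotone (f : P -> R) : Prop :=
  forall x y : P, (x <= y)%O -> f x <= f y.

(* f^-(x,y) = sup { f z : z in (down x) cap (down y) }; None encodes -infinity (empty sup) *)
Definition fminus (f : P -> R) (x y : P) : option R :=
  if [pick z | (z <= x)%O && (z <= y)%O] is Some z0
  then Some (\big[Num.max/f z0]_(z | (z <= x)%O && (z <= y)%O) f z)
  else None.

(* f^+(x,y) = inf { f z : z in (up x) cap (up y) }; None encodes +infinity (empty inf) *)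
Definition fplus (f : P -> R) (x y : P) : option R :=
  if [pick z | (x <= z)%O && (y <= z)%O] is Some z0
  then Some (\big[Num.min/f z0]_(z | (x <= z)%O && (y <= z)%O) f z)
  else None.

(* extended-real inequality  f^-(x,y) + f^+(x,y) <= c  (c finite);
   -infinity + anything-not-(+infinity) <= c holds; +infinity on the left fails;
   the case -infinity + +infinity cannot arise once up-sets meet (handled below) *)
Definition ext_sum_le (m p : option R) (c : R) : Prop :=
  match m, p with
  | Some a, Some b => a + b <= c
  | None, Some _ => True
  | _, None => False
  end.

Definition upper_valuation (v : P -> R) : Prop :=
  isotone v /\
  (forall x y : P, exists z : P, (x <= z)%O /\ (y <= z)%O) /\
  (forall x y : P, ext_sum_le (fminus v x y) (fplus v x y) (v x + v y)).

End UpperValuation.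

Definition kappa {disp : Order.disp_t} {P : finPOrderType disp} {R : realFieldType}
  (K : {set P}) (A : R) (x : P) : R :=
  A - (#|[set k in K | (x <= k)%O]|)%:R.

From HB Require Import structures.
From mathcomp Require Import all_boot all_order all_algebra.
Import Order.TTheory GRing.Theory Num.Theory.
Local Open Scope ring_scope.

(* In a finite join-semilattice L the common upper bounds of x and y are
   exactly the elements above x `|` y, so for an isotone v the infimum
   v^+(x,y) is attained at the join: v^+(x,y) = v (x `|` y).  Hence v is an
   upper valuation as soon as it is isotone and satisfies the "local
   submodularity" inequality
       v z + v (x `|` y) <= v x + v y      whenever z <= x and z <= y,
   because the supremum v^-(x,y) is then bounded term by term.
   For kappa (x) = A - #|K above x| both conditions reduce to counting:
   the sets  above x := {k in K | x <= k}  shrink as x grows, and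
   above (x `|` y) = above x :&: above y, so inclusion-exclusion gives
       #|above x| + #|above y| <= #|above z| + #|above (x `|` y)|. *)

Section JoinSemilatticeValuations.
Variables (disp : Order.disp_t) (L : finJoinSemilatticeType disp).
Variable (R : realFieldType).
Implicit Types (f : L -> R) (x y z : L).

Lemma fplus_join f x y : isotone f -> fplus f x y = Some (f (x `|` y)%O).
Proof.
move=> f_iso; rewrite /fplus.
case: pickP => [z0 hz0 | no_ub]; last by have := no_ub (x `|` y)%O; rewrite leUl leUr.
congr Some; apply/le_anti/andP; split.
  by rewrite (bigD1 (x `|` y)%O) ?leUl ?leUr //= ge_min lexx.
have join_le z : (x <= z)%O && (y <= z)%O -> f (x `|` y)%O <= f z.
  by move=> xyz; apply: f_iso; rewrite leUx.
elim/big_ind: _ => [| a b ha hb | z hz]; [exact: join_le | by rewrite le_min ha hb | exact: join_le].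
Qed.

Lemma fminus_bound f x y b c :
  (forall z, (z <= x)%O -> (z <= y)%O -> f z + b <= c) ->
  ext_sum_le (fminus f x y) (Some b) c.
Proof.
move=> bound; rewrite /fminus; case: pickP => [z0 hz0 | _] //=.
have below z : (z <= x)%O && (z <= y)%O -> f z <= c - b.
  by case/andP=> zx zy; rewrite lerBrDr bound.
rewrite -lerBrDr; elim/big_ind: _ => [| a a' ha ha' | z hz];
  [exact: below | by rewrite ge_max ha ha' | exact: below].
Qed.

Lemma upper_valuation_of_join (v : L -> R) :
  isotone v ->
  (forall x y z, (z <= x)%O -> (z <= y)%O -> v z + v (x `|` y)%O <= v x + v y) ->
  upper_valuation v.
Proof.
move=> v_iso v_sub; split=> //; split.
  by move=> x y; exists (x `|` y)%O; rewrite leUl leUr.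
by move=> x y; rewrite fplus_join //; apply: fminus_bound => z; apply: v_sub.
Qed.

End JoinSemilatticeValuations.

Section Kappa.
Variables (disp : Order.disp_t) (L : finJoinSemilatticeType disp).
Variables (R : realFieldType) (K : {set L}) (A : R).
Implicit Types (x y z : L).

Definition above x : {set L} := [set k in K | (x <= k)%O].

Lemma above_antitone x y : (x <= y)%O -> above y \subset above x.
Proof.
move=> xy; apply/subsetP=> k; rewrite !inE => /andP[-> yk].
exact: le_trans xy yk.
Qed.

Lemma above_join x y : above (x `|` y)%O = above x :&: above y.
Proof. by apply/setP=> k; rewrite !inE leUx andbACA andbb. Qed.

(* Inclusion-exclusion: the union of above x and above y lies in above z,
   their intersection is above (x `|` y). *)
Lemma card_above_submodular x y z : (z <= x)%O -> (z <= y)%O ->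
  (#|above x| + #|above y| <= #|above z| + #|above (x `|` y)%O|)%N.
Proof.
move=> zx zy; rewrite above_join -cardsUI leq_add2r subset_leq_card //.
by rewrite subUset !above_antitone.
Qed.

Lemma kappa_isotone : isotone (kappa K A).
Proof.
by move=> x y xy; rewrite /kappa lerD2l lerN2 ler_nat subset_leq_card ?above_antitone.
Qed.

Lemma kappa_submodular x y z : (z <= x)%O -> (z <= y)%O ->
  kappa K A z + kappa K A (x `|` y)%O <= kappa K A x + kappa K A y.
Proof.
move=> zx zy; rewrite /kappa -/(above _) addrACA [X in _ <= X]addrACA lerD2l.
by rewrite -!opprD lerN2 -!natrD ler_nat card_above_submodular.
Qed.

End Kappa.

Theorem mainTheorem6 (disp : Order.disp_t) (P : finJoinSemilatticeType disp)
  (R : realFieldType) (K : {set P}) (A : R) :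
  upper_valuation (kappa K A).
Proof.
apply: upper_valuation_of_join; first exact: kappa_isotone.
exact: kappa_submodular.
Qed.
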